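(* Let $K$ be a uniformly bounded strictly positive definite kernel on ${\mathscr X}$, $\mu$ a probability measure on ${\mathscr X}$, $r=(r_0,\dots,r_p)^T$ bounded measurable functions with $r_0\equiv1$ and $\mathbf M_r=\int r\,r^T\,d\mu$ nonsingular, and $x_1,\dots,x_n\in{\mathscr X}$ pairwise distinct. Take $h=r$, so $\mathbf H_n=\mathbf R_n$ and $\mathbf B(\mu)=\mathbf M_r$. Assume $\mathbf R_n$ has full column rank and $\widetilde{\mathbf K}_n$ is nonsingular. Then for every $y\in\mathbb{R}^n$, with $\widehat{\mathbf I}_n$ and $\mathbf V_n$ as defined in the context, $$\widehat{\mathbf I}_n=\mathbf M_r(\mathbf R_n^T\widetilde{\mathbf K}_n^{-1}\mathbf R_n)^{-1}\mathbf R_n^T\widetilde{\mathbf K}_n^{-1}y,\qquad \mathbf V_n=\mathbf M_r(\mathbf R_n^T\widetilde{\mathbf K}_n^{-1}\mathbf R_n)^{-1}\mathbf M_r.$$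
   Context: ${\mathscr X}$ is a nonempty measurable space; $K:{\mathscr X}\times{\mathscr X}\to\mathbb{R}$ is symmetric, measurable, uniformly bounded ($\sup|K|<\infty$) and strictly positive definite ($\mathbf K_n=(K(x_i,x_j))_{i,j}$ positive definite for pairwise distinct points). Let $\mathbf R_n=(r_j(x_i))_{i=1..n,\,j=0..p}$, $\mathbf k_n(x)=(K(x,x_1),\dots,K(x,x_n))^T$, $\mathbf P_n(\mu)=\int r(x)\mathbf k_n^T(x)\,d\mu(x)$ ($(p+1)\times n$), $\mathbf U(\mu)=\int\int r(x)r^T(x')K(x,x')\,d\mu(x)\,d\mu(x')$, $\hat\beta=(\mathbf R_n^T\mathbf K_n^{-1}\mathbf R_n)^{-1}\mathbf R_n^T\mathbf K_n^{-1}y$, $\widehat{\mathbf I}_n=\mathbf M_r\hat\beta+\mathbf P_n(\mu)\mathbf K_n^{-1}(y-\mathbf R_n\hat\beta)$, and $\mathbf V_n=\mathbf U(\mu)-\mathbf P_n(\mu)\mathbf K_n^{-1}\mathbf P_n^T(\mu)+[\mathbf M_r-\mathbf P_n(\mu)\mathbf K_n^{-1}\mathbf R_n](\mathbf R_n^T\mathbf K_n^{-1}\mathbf R_n)^{-1}[\mathbf M_r-\mathbf P_n(\mu)\mathbf K_n^{-1}\mathbf R_n]^T$. With $\mathbf u_\mu(x)=\int r(x')K(x',x)\,d\mu(x')$, the reduced kernel is $K_\mu(x,x')=K(x,x')-\mathbf u_\mu^T(x)\mathbf M_r^{-1}r(x')-r^T(x)\mathbf M_r^{-1}\mathbf u_\mu(x')+r^T(x)\mathbf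 M_r^{-1}\mathbf U(\mu)\mathbf M_r^{-1}r(x')$, and $\widetilde{\mathbf K}_n=(K_\mu(x_i,x_j))_{i,j=1}^n$. *)

From HB Require Import structures.
From mathcomp Require Import all_boot all_order all_algebra.
Set Implicit Arguments. Unset Strict Implicit. Unset Printing Implicit Defensive.
Import Order.TTheory GRing.Theory Num.Theory.
Local Open Scope ring_scope.

Section KrigingDefs.
Variables (R : realFieldType) (X : Type).

Definition posdef n (A : 'M[R]_n) : Prop :=
  forall v : 'cV[R]_n, v != 0 -> 0 < (v^T *m A *m v) ord0 ord0.

Definition kernel_symmetric (K : X -> X -> R) : Prop :=
  forall x x', K x x' = K x' x.

Definition kernel_bounded (K : X -> X -> R) : Prop :=
  exists c : R, forall x x', `|K x x'| <= c.

Definition fun_bounded (f : X -> R) : Prop :=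
  exists c : R, forall x, `|f x| <= c.

Definition strictly_pd (K : X -> X -> R) : Prop :=
  forall (n : nat) (x : 'I_n -> X), injective x ->
    posdef (\matrix_(i, j) K (x i) (x j)).

(* Abstract integral against a probability measure mu: a normalised, positive,
   linear functional on bounded functions. *)
Definition prob_integral (I : (X -> R) -> R) : Prop :=
  [/\ forall f g, fun_bounded f -> fun_bounded g ->
        I (fun x => f x + g x) = I f + I g,
      forall (c : R) f, fun_bounded f -> I (fun x => c * f x) = c * I f,
      forall f, fun_bounded f -> (forall x, 0 <= f x) -> 0 <= I f
    & I (fun _ => 1) = 1].

Variables (p n : nat) (I : (X -> R) -> R) (K : X -> X -> R)
          (r : 'I_p.+1 -> X -> R) (x : 'I_n -> X).

Definition rvec (z : X) : 'cV[R]_p.+1 := \col_j r j z.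
Definition Rn : 'M[R]_(n, p.+1) := \matrix_(i, j) r j (x i).
Definition Kn : 'M[R]_n := \matrix_(i, j) K (x i) (x j).
Definition Mr : 'M[R]_p.+1 := \matrix_(j, k) I (fun z => r j z * r k z).
Definition Pn : 'M[R]_(p.+1, n) := \matrix_(j, i) I (fun z => r j z * K z (x i)).
Definition Umu : 'M[R]_p.+1 :=
  \matrix_(j, k) I (fun z => I (fun z' => r j z * r k z' * K z z')).
Definition umu (z : X) : 'cV[R]_p.+1 := \col_j I (fun z' => r j z' * K z' z).

Definition Kmu (z z' : X) : R :=
  K z z' - ((umu z)^T *m invmx Mr *m rvec z') ord0 ord0
         - ((rvec z)^T *m invmx Mr *m umu z') ord0 ord0
         + ((rvec z)^T *m invmx Mr *m Umu *m invmx Mr *m rvec z') ord0 ord0.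

Definition Ktilde : 'M[R]_n := \matrix_(i, j) Kmu (x i) (x j).

Definition betahat (y : 'cV[R]_n) : 'cV[R]_p.+1 :=
  invmx (Rn^T *m invmx Kn *m Rn) *m Rn^T *m invmx Kn *m y.

Definition Ihat (y : 'cV[R]_n) : 'cV[R]_p.+1 :=
  Mr *m betahat y + Pn *m invmx Kn *m (y - Rn *m betahat y).

Definition Vn : 'M[R]_p.+1 :=
  Umu - Pn *m invmx Kn *m Pn^T
  + (Mr - Pn *m invmx Kn *m Rn) *m invmx (Rn^T *m invmx Kn *m Rn)
      *m (Mr - Pn *m invmx Kn *m Rn)^T.

End KrigingDefs.

(* Write W = K_n^-1, B = (R_n^T W R_n)^-1 and L for the weight matrix with
   I_n = L y.  Then L R_n = M_r, and multiplying L by the expansion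
   K~_n = K_n - P_n^T M_r^-1 R_n^T - R_n M_r^-1 P_n + R_n M_r^-1 U M_r^-1 R_n^T
   collapses to L K~_n = Q R_n^T for an explicit Q.  Hence L = Q R_n^T K~_n^-1,
   and M_r = L R_n = Q G with G = R_n^T K~_n^-1 R_n, so G is invertible and
   Q = M_r G^-1.  This is the first identity; V_n = Q M_r is a direct expansion. *)

From Stdlib Require Import FunctionalExtensionality.
From HB Require Import structures.
From mathcomp Require Import all_boot all_order all_algebra.
Set Implicit Arguments. Unset Strict Implicit. Unset Printing Implicit Defensive.
Import Order.TTheory GRing.Theory Num.Theory.
Local Open Scope ring_scope.

Section PosDef.
Variable R : realFieldType.

Lemma posdef_unitmx n (A : 'M[R]_n) : posdef A -> A \in unitmx.
Proof.
move=> pdA; rewrite unitmxE unitfE; apply/negP => /det0P [v v_neq0 vA0].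
have := pdA v^T; rewrite trmx_eq0 => /(_ v_neq0).
by rewrite trmxK vA0 mul0mx mxE ltxx.
Qed.

Lemma posdef_invmx n (A : 'M[R]_n) : posdef A -> posdef (invmx A).
Proof.
move=> pdA v v_neq0; have A_unit := posdef_unitmx pdA.
have [w vE w_neq0] : exists2 w, v = A *m w & w != 0.
  exists (invmx A *m v); first by rewrite mulKVmx.
  by apply: contraNneq v_neq0 => w0; rewrite -(mulKVmx A_unit v) w0 mulmx0.
rewrite vE trmx_mul mulmxA mulmxKV //.
have -> : (w^T *m A^T *m w) ord0 ord0 = ((w^T *m A *m w)^T) ord0 ord0.
  by rewrite !trmx_mul trmxK mulmxA.
by rewrite mxE; exact: pdA.
Qed.

Lemma posdef_congr n m (A : 'M[R]_n) (C : 'M[R]_(n, m)) :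
  posdef A -> \rank C = m -> posdef (C^T *m A *m C).
Proof.
move=> pdA rkC v v_neq0.
have Cv_neq0 : C *m v != 0.
  rewrite -trmx_eq0 trmx_mul mulmx_free_eq0 ?trmx_eq0 //.
  by rewrite /row_free mxrank_tr rkC.
by have := pdA _ Cv_neq0; rewrite trmx_mul !mulmxA.
Qed.
End PosDef.

Section GeneralizedLeastSquares.
Variables (F : fieldType) (m n : nat).
Variables (M U : 'M[F]_m) (P : 'M[F]_(m, n)) (C : 'M[F]_(n, m)) (K : 'M[F]_n).
Hypotheses (M_unit : M \in unitmx) (K_unit : K \in unitmx).
Hypothesis CKC_unit : C^T *m invmx K *m C \in unitmx.

Let W := invmx K.
Let B := invmx (C^T *m W *m C).

Definition gls_weights : 'M[F]_(m, n) :=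
  M *m B *m C^T *m W + P *m W *m (1%:M - C *m B *m C^T *m W).

Definition reduced_cov : 'M[F]_n :=
  K - P^T *m invmx M *m C^T - C *m invmx M *m P
    + C *m invmx M *m U *m invmx M *m C^T.

Let L := gls_weights.
Let Kt := reduced_cov.
Let Q := M *m B - P *m W *m C *m B - L *m P^T *m invmx M + U *m invmx M.

Lemma gls_weights_unbiased : L *m C = M.
Proof.
have BCWC k (Y : 'M_(k, m)) : Y *m B *m C^T *m W *m C = Y.
  by rewrite -!mulmxA mulmxA [C^T *m _]mulmxA mulmxKV.
by rewrite /L /gls_weights mulmxDl mulmxBr mulmx1 !mulmxA mulmxBl !BCWC subrr addr0.
Qed.

Lemma gls_weights_reduced_cov : L *m Kt = Q *m C^T.
Proof.
have LK : L *m K = M *m B *m C^T + P - P *m W *m C *m B *m C^T.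
  by rewrite /L /gls_weights mulmxDl mulmxBr mulmx1 !mulmxA mulmxBl !mulmxKV // addrA.
rewrite /Kt /reduced_cov !mulmxDr ?mulmxN !mulmxA gls_weights_unbiased mulmxV //.
rewrite !mul1mx LK /Q !mulmxDl ?mulNmx.
by rewrite [_ + P - _]addrAC [_ + P - _]addrAC addrK mulmxDl.
Qed.

Hypothesis Kt_unit : Kt \in unitmx.
Let G := C^T *m invmx Kt *m C.

Lemma gls_coefE : Q = M *m invmx G.
Proof.
have LE : L = Q *m C^T *m invmx Kt by rewrite -gls_weights_reduced_cov mulmxK.
have MQG : M = Q *m G by rewrite -gls_weights_unbiased LE /G !mulmxA.
have G_unit : G \in unitmx by move: M_unit; rewrite MQG unitmx_mul => /andP[].
by rewrite MQG mulmxK.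
Qed.

Lemma gls_weightsE : L = M *m invmx G *m C^T *m invmx Kt.
Proof. by rewrite -gls_coefE -gls_weights_reduced_cov mulmxK. Qed.

Hypotheses (M_sym : M^T = M) (K_sym : K^T = K).

Lemma gls_varianceE :
  U - P *m W *m P^T + (M - P *m W *m C) *m B *m (M - P *m W *m C)^T
  = M *m invmx G *m M.
Proof.
have W_sym : W^T = W by rewrite trmx_inv K_sym.
rewrite -gls_coefE /Q !mulmxDl !mulNmx mulmxKV // /L /gls_weights.
rewrite linearB /= !trmx_mul M_sym W_sym.
rewrite !(mulmxDl, mulmxDr, mulmxBl, mulmxBr, mulmxN, mulNmx) !mulmxA mulmx1.
by rewrite !mulmxKV // !opprD !opprK !addrA (ACl (3*5*4*2*6*1)).
Qed.
End GeneralizedLeastSquares.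

Section KrigingModel.
Variables (R : realFieldType) (X : Type) (p n : nat).
Variables (I : (X -> R) -> R) (K : X -> X -> R) (r : 'I_p.+1 -> X -> R).
Variable x : 'I_n -> X.

Lemma Kn_sym : kernel_symmetric K -> (Kn K x)^T = Kn K x.
Proof. by move=> K_sym; apply/matrixP => i j; rewrite !mxE K_sym. Qed.

Lemma Mr_sym : (Mr I r)^T = Mr I r.
Proof.
apply/matrixP => j k; rewrite !mxE; congr I.
by apply: functional_extensionality => z; rewrite mulrC.
Qed.

Lemma Ktilde_reduced_cov :
  Ktilde I K r x = reduced_cov (Mr I r) (Umu I K r) (Pn I K r x) (Rn r x) (Kn K x).
Proof.
have rvecE j : rvec r (x j) = col j (Rn r x)^T by apply/matrixP => a b; rewrite !mxE.
have rvec_trE i : (rvec r (x i))^T = row i (Rn r x) by apply/matrixP => a b; rewrite !mxE.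
have umuE j : umu I K r (x j) = col j (Pn I K r x) by apply/matrixP => a b; rewrite !mxE.
have umu_trE i : (umu I K r (x i))^T = row i (Pn I K r x)^T.
  by apply/matrixP => a b; rewrite !mxE.
apply/matrixP => i j; rewrite [LHS]mxE /Kmu rvec_trE umu_trE rvecE umuE.
by rewrite !colEsub !rowEsub !mulmx_colsub !mul_rowsub_mx !mxE.
Qed.

Lemma Ihat_gls_weights y :
  Ihat I K r x y = gls_weights (Mr I r) (Pn I K r x) (Rn r x) (Kn K x) *m y.
Proof.
rewrite /Ihat /betahat /gls_weights mulmxDl -[_ *m _ *m (1%:M - _) *m y]mulmxA.
by rewrite mulmxBl mul1mx !mulmxA.
Qed.

End KrigingModel.

Theorem lemmaB1 (R : realFieldType) (X : Type) (p n : nat)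
  (I : (X -> R) -> R) (K : X -> X -> R) (r : 'I_p.+1 -> X -> R)
  (x : 'I_n -> X) :
  prob_integral I ->
  kernel_symmetric K -> kernel_bounded K -> strictly_pd K ->
  (forall j, fun_bounded (r j)) ->
  (forall z, r ord0 z = 1) ->
  Mr I r \in unitmx ->
  injective x ->
  \rank (Rn r x) = p.+1 ->
  Ktilde I K r x \in unitmx ->
  forall y : 'cV[R]_n,
    Ihat I K r x y =
      Mr I r *m invmx ((Rn r x)^T *m invmx (Ktilde I K r x) *m Rn r x)
        *m (Rn r x)^T *m invmx (Ktilde I K r x) *m y
    /\ Vn I K r x =
      Mr I r *m invmx ((Rn r x)^T *m invmx (Ktilde I K r x) *m Rn r x)
        *m Mr I r.
Proof.
move=> _ K_sym _ K_spd _ _ M_unit x_inj rankR Kt_unit y.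
have K_pd : posdef (Kn K x) by exact: K_spd.
have K_unit := posdef_unitmx K_pd.
have RWR_unit := posdef_unitmx (posdef_congr (posdef_invmx K_pd) rankR).
rewrite Ktilde_reduced_cov in Kt_unit *.
split.
- by rewrite Ihat_gls_weights (gls_weightsE M_unit K_unit RWR_unit Kt_unit).
- exact: (gls_varianceE M_unit K_unit RWR_unit Kt_unit (Mr_sym I r) (Kn_sym x K_sym)).
Qed.
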